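(* Let $A$ be a regular vertex of a phylogenetic quiver $\mathcal O$, let $B$ be a vertex of the clade $\mathcal O_A$, and set $m=h(A)$, $n=h(B)$ (so $n\ge m$). If $p^{n-m}([B])\neq[A]$, then $B$ is a phylogenetic vertex of $\mathcal O_A$ and $h_A(B)=n-m+1$.
   Context: A quiver consists of a class of vertices and, for each ordered pair of vertices $(A,B)$, a set of edges $A\to B$ (loops and multiple edges allowed). An evolution of length $m\ge 0$ is a sequence $A_0\leftarrow A_1\leftarrow\cdots\leftarrow A_m$ of vertices together with edges $A_k\to A_{k-1}$ ($1\le k\le m$); $A_0$ is its initial and $A_m$ its terminal vertex. Write $A\le B$ ($A$ is an ancestor of $B$, $B$ a descendant of $A$) if there is an evolution with initial vertex $A$ and terminal vertex $B$; $A,B$ are isotypic ($A\sim B$) if $A\le B$ and $B\le A$. A vertex $A$ is primitive if every ancestor of $A$ is isotypic to $A$. A full evolution for $X$ is an evolution with primitive initial vertex and terminal vertex $X$. The height $h(X)$ is the smallest length of a full evolution for $X$ ($\infty$ if none). An evolution $\alpha=(A_0\leftarrow\cdots\leftarrow A_m)$ embeds in $\beta=(B_0\leftarrow\cdots\leftarrow B_n)$ if $m\le n$ and there are $0\le r_0<\cdots<r_m\le n$ with $A_k\sim B_{r_k}$. A universal evolution for $X$ is a full evolution for $X$ embedding in every full evolution for $X$; $X$ is phylogenetic if one exists. A quiver is monotonous if $h(A)\ge h(B)$ for every edge $A\to B$; small if its isotypy classes form a set; phylogenetic if small, monotonous, and all vertices phylogenetic. For a phylogenetic quiver, $[A]$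 denotes the isotypy class of $A$, $\mathcal O_m$ the set of isotypy classes of vertices of height $m$, and for $m\ge1$ the parental map $p:\mathcal O_m\to\mathcal O_{m-1}$ is $p([A])=[A_{m-1}]$ where $A_0\leftarrow\cdots\leftarrow A_{m-1}\leftarrow A_m=A$ is any universal evolution for $A$ (well defined); $p^0$ is the identity. The clade $\mathcal O_A$ is the quiver formed by all descendants of $A$ in $\mathcal O$ and all edges between them; $h_A$ denotes height computed in $\mathcal O_A$, and phylogeneticity in $\mathcal O_A$ is likewise computed within $\mathcal O_A$. A vertex $A$ is regular if for every $B$ in $\mathcal O_A$ with $h(B)=h(A)$ there is an edge $B\to A$ in $\mathcal O$. *)

From Stdlib Require Import Arith.
Set Implicit Arguments.

(* A quiver is a type of vertices V with an edge-existence relation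
   E A B : "there is an edge A -> B".  Only existence of edges matters in
   every notion below. *)

Section Quiver.
Variables (V : Type) (E : V -> V -> Prop).

Definition evolution (a : nat -> V) (m : nat) : Prop :=
  forall k, 1 <= k <= m -> E (a k) (a (k - 1)).

Definition ancestor (A B : V) : Prop :=
  exists (a : nat -> V) (m : nat), evolution a m /\ a 0 = A /\ a m = B.

Definition isotypic (A B : V) : Prop := ancestor A B /\ ancestor B A.

Definition primitive (A : V) : Prop := forall B, ancestor B A -> isotypic B A.

Definition full_evolution (a : nat -> V) (m : nat) (X : V) : Prop :=
  evolution a m /\ primitive (a 0) /\ a m = X.

Definition height (X : V) (n : nat) : Prop :=
  (exists a, full_evolution a n X) /\
  (forall a k, full_evolution a k X -> n <= k).

Definition embeds (a : nat -> V) (m : nat) (b : nat -> V) (n : nat) : Prop :=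
  m <= n /\
  exists r : nat -> nat,
    (forall k, k < m -> r k < r (k + 1)) /\ r m <= n /\
    (forall k, k <= m -> isotypic (a k) (b (r k))).

Definition universal_evolution (a : nat -> V) (m : nat) (X : V) : Prop :=
  full_evolution a m X /\
  forall b n, full_evolution b n X -> embeds a m b n.

Definition phylogenetic_vertex (X : V) : Prop :=
  exists a m, universal_evolution a m X.

(* h(A) >= h(B) for every edge A -> B, with the convention h = infinity
   when no full evolution exists. *)
Definition monotonous : Prop :=
  forall A B m, E A B -> height A m -> exists n, height B n /\ n <= m.

(* Smallness is automatic: V is a type, so isotypy classes form a set. *)
Definition phylogenetic_quiver : Prop :=
  monotonous /\ forall X, phylogenetic_vertex X.

(* p([X]) = [Y] : Y is the penultimate vertex of a universal evolution of X *)
Definition parent (X Y : V) : Prop :=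
  exists a m, universal_evolution a m X /\ 1 <= m /\ isotypic (a (m - 1)) Y.

Fixpoint parent_iter (k : nat) (X Y : V) : Prop :=
  match k with
  | 0 => isotypic X Y
  | S k' => exists Z, parent_iter k' X Z /\ parent Z Y
  end.

Definition regular (A : V) : Prop :=
  forall B m, ancestor A B -> height A m -> height B m -> E B A.

End Quiver.

Definition clade_vertex (V : Type) (E : V -> V -> Prop) (A : V) : Type :=
  { x : V | ancestor E A x }.

Definition clade_edge (V : Type) (E : V -> V -> Prop) (A : V)
  (x y : clade_vertex E A) : Prop := E (proj1_sig x) (proj1_sig y).
Arguments clade_edge {V} E A x y.
Arguments clade_vertex {V} E A.

From Stdlib Require Import Arith Lia ProofIrrelevance.

(* Let B_0 <- ... <- B_m <- ... <- B_n = B be a universal evolution of B.  The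
   prefix ending at B_m is universal, so h(B_m) = m; B_m descends from A (B_m
   sits in any full evolution of B through A), so regularity yields an edge
   B_m -> A, and B_m is not isotypic to A because [B_m] = p^(n-m)([B]).  Thus
   A <- B_m <- ... <- B_n is a full evolution of B in the clade, where A is
   primitive.  It is universal there: any full evolution of B in the clade
   starts at a vertex isotypic to A, which by monotonicity has a full
   evolution in O of length at most m; the concatenation is a full evolution
   of B in O, into which the universal one embeds, and B_m cannot be matched
   inside the prefix since it is not isotypic to A. *)

Set Implicit Arguments.

Definition cat {V : Type} (a : nat -> V) (p : nat) (d : nat -> V) : nat -> V :=
  fun i => if i <=? p then a i else d (i - p).

Definition shift {V : Type} (b : nat -> V) (l : nat) : nat -> V :=
  fun i => b (l + i).

Definition graft {V : Type} (A : V) (b : nat -> V) (m : nat) : nat -> V :=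
  fun i => match i with 0 => A | S i => b (m + i) end.

Lemma graft_end V (A : V) b m n : m <= n -> graft A b m (n - m + 1) = b n.
Proof.
  intros Hmn; replace (n - m + 1) with (S (n - m)) by lia; cbn [graft].
  f_equal; lia.
Qed.

Lemma cat_l V (a d : nat -> V) p i : i <= p -> cat a p d i = a i.
Proof. intros H; unfold cat; destruct (Nat.leb_spec i p); [reflexivity | lia]. Qed.

Lemma cat_r V (a d : nat -> V) p i : p < i -> cat a p d i = d (i - p).
Proof. intros H; unfold cat; destruct (Nat.leb_spec i p); [lia | reflexivity]. Qed.

Lemma cat_end V (a d : nat -> V) p k : a p = d 0 -> cat a p d (p + k) = d k.
Proof.
  intros H; destruct k as [|k].
  - rewrite Nat.add_0_r, cat_l by lia; exact H.
  - rewrite cat_r by lia; f_equal; lia.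
Qed.

Lemma strict_increasing_gap (r : nat -> nat) p :
  (forall k, k < p -> r k < r (k + 1)) ->
  forall i j, i + j <= p -> r i + j <= r (i + j).
Proof.
  intros Hr i j; induction j as [|j IH]; intros Hij.
  - rewrite !Nat.add_0_r; lia.
  - specialize (IH ltac:(lia)); specialize (Hr (i + j) ltac:(lia)).
    replace (i + S j) with (i + j + 1) by lia; lia.
Qed.

Section Quiver.
Variables (V : Type) (E : V -> V -> Prop).

Lemma evolution_prefix a n l : evolution E a n -> l <= n -> evolution E a l.
Proof. intros Ha Hl k Hk; apply Ha; lia. Qed.

Lemma evolution_shift b n l :
  evolution E b n -> l <= n -> evolution E (shift b l) (n - l).
Proof.
  intros Hb Hl k Hk; unfold shift.
  replace (l + (k - 1)) with (l + k - 1) by lia; apply Hb; lia.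
Qed.

Lemma evolution_cat a p d k :
  evolution E a p -> evolution E d k -> a p = d 0 ->
  evolution E (cat a p d) (p + k).
Proof.
  intros Ha Hd H0 i Hi; unfold cat.
  destruct (Nat.leb_spec i p), (Nat.leb_spec (i - 1) p); try lia.
  - apply Ha; lia.
  - replace (i - 1) with p by lia; replace (i - p) with 1 by lia.
    rewrite H0; apply (Hd 1); lia.
  - replace (i - 1 - p) with (i - p - 1) by lia; apply Hd; lia.
Qed.

Lemma evolution_graft A b m n :
  evolution E b n -> m <= n -> E (b m) A ->
  evolution E (graft A b m) (n - m + 1).
Proof.
  intros Hb Hmn HA [|k] Hk; [lia |].
  destruct k as [|k]; cbn [graft Nat.sub].
  - rewrite Nat.add_0_r; exact HA.
  - replace (m + k) with (m + S k - 1) by lia; apply Hb; lia.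
Qed.

Lemma full_evolution_cat a p Y d k :
  full_evolution E a p Y -> evolution E d k -> d 0 = Y ->
  full_evolution E (cat a p d) (p + k) (d k).
Proof.
  intros (Ha & Ha0 & Hap) Hd Hd0; split; [| split].
  - apply evolution_cat; auto; congruence.
  - rewrite cat_l by lia; exact Ha0.
  - apply cat_end; congruence.
Qed.

Lemma ancestor_refl X : ancestor E X X.
Proof. exists (fun _ => X), 0; split; [intros k Hk; lia | split; reflexivity]. Qed.

Lemma ancestor_trans X Y Z : ancestor E X Y -> ancestor E Y Z -> ancestor E X Z.
Proof.
  intros (a & p & Ha & <- & Hap) (d & k & Hd & Hd0 & <-).
  exists (cat a p d), (p + k); split; [| split].
  - apply evolution_cat; auto; congruence.
  - rewrite cat_l by lia; reflexivity.
  - apply cat_end; congruence.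
Qed.

Lemma ancestor_evolution a p i j :
  evolution E a p -> i <= j <= p -> ancestor E (a i) (a j).
Proof.
  intros Ha Hij; exists (shift a i), (j - i); split; [| split].
  - apply evolution_prefix with (p - i); [apply evolution_shift |]; auto; lia.
  - unfold shift; f_equal; lia.
  - unfold shift; f_equal; lia.
Qed.

Lemma isotypic_refl X : isotypic E X X.
Proof. split; apply ancestor_refl. Qed.

Lemma isotypic_sym X Y : isotypic E X Y -> isotypic E Y X.
Proof. intros [H1 H2]; split; assumption. Qed.

Lemma isotypic_trans X Y Z : isotypic E X Y -> isotypic E Y Z -> isotypic E X Z.
Proof. intros [H1 H2] [H3 H4]; split; eapply ancestor_trans; eauto. Qed.

Lemma embeds_index a p b N :
  embeds E a p b N ->
  exists r, (forall i j, i + j <= p -> r i + j <= r (i + j)) /\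
            (forall k, k <= p -> k <= r k /\ r k + (p - k) <= N) /\
            (forall k, k <= p -> isotypic E (a k) (b (r k))).
Proof.
  intros [_ (r & Hr & HrN & Hiso)].
  pose proof (strict_increasing_gap r Hr) as Hgap.
  exists r; split; [exact Hgap | split; [| exact Hiso]].
  intros k Hk; pose proof (Hgap 0 k ltac:(lia)); pose proof (Hgap k (p - k) ltac:(lia)).
  replace (k + (p - k)) with p in * by lia; cbn in *; lia.
Qed.

Lemma height_unique X p q : height E X p -> height E X q -> p = q.
Proof.
  intros [[a Ha] Hp] [[b Hb] Hq].
  specialize (Hp b q Hb); specialize (Hq a p Ha); lia.
Qed.

Lemma universal_height a m X : universal_evolution E a m X -> height E X m.
Proof.
  intros [Ha Hu]; split; [exists a; exact Ha |].
  intros b k Hb; apply (Hu b k Hb).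
Qed.

Lemma universal_prefix b n X l :
  universal_evolution E b n X -> l <= n -> universal_evolution E b l (b l).
Proof.
  intros [[Hb [Hb0 Hbn]] Hu] Hl; split.
  - split; [eapply evolution_prefix; eauto | split; auto].
  - intros f q Hf.
    assert (Hg : full_evolution E (cat f q (shift b l)) (q + (n - l)) X).
    { replace X with (shift b l (n - l)) by (unfold shift; rewrite <- Hbn; f_equal; lia).
      apply full_evolution_cat with (b l); [exact Hf | apply evolution_shift; auto |].
      unfold shift; rewrite Nat.add_0_r; reflexivity. }
    destruct (embeds_index (Hu _ _ Hg)) as (r & Hgap & Hbound & Hiso).
    pose proof (Hbound l Hl) as [Hrl HrlN].
    split; [lia |]; exists r; split; [| split].
    + intros k Hk; pose proof (Hgap k 1 ltac:(lia)); lia.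
    + lia.
    + intros k Hk; pose proof (Hgap k (l - k) ltac:(lia)).
      replace (k + (l - k)) with l in * by lia.
      rewrite <- (@cat_l _ f (shift b l) q (r k)) by lia; apply Hiso; lia.
Qed.

Lemma parent_iter_universal b n X :
  universal_evolution E b n X -> forall j, j <= n -> parent_iter E j X (b (n - j)).
Proof.
  intros Hb j; induction j as [|j IH]; intros Hj; cbn [parent_iter].
  - rewrite Nat.sub_0_r, (proj2 (proj2 (proj1 Hb))); apply isotypic_refl.
  - exists (b (n - j)); split; [apply IH; lia |].
    exists b, (n - j); split; [| split].
    + apply universal_prefix with n X; auto; lia.
    + lia.
    + replace (n - j - 1) with (n - S j) by lia; apply isotypic_refl.
Qed.

Lemma parent_iter_isotypic k X Y Y' :
  parent_iter E k X Y -> isotypic E Y Y' -> parent_iter E k X Y'.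
Proof.
  destruct k as [|k]; cbn [parent_iter]; [apply isotypic_trans |].
  intros (Z & HZ & (a & p & Ha & Hp & HY)) HY'.
  exists Z; split; [exact HZ |].
  exists a, p; split; [exact Ha | split; [exact Hp | eapply isotypic_trans; eauto]].
Qed.

Lemma monotonous_ancestor_height X Y q :
  monotonous E -> ancestor E X Y -> height E Y q ->
  exists q', height E X q' /\ q' <= q.
Proof.
  intros HM (a & p & Ha & <- & <-); revert q.
  induction p as [|p IH]; intros q Hq; [exists q; split; auto |].
  destruct (HM _ _ _ (Ha (S p) ltac:(lia)) Hq) as (q1 & H1 & H2).
  cbn in H1; rewrite Nat.sub_0_r in H1.
  destruct (IH (evolution_prefix Ha (Nat.le_succ_diag_r p)) q1 H1) as (q' & H3 & H4).
  exists q'; split; [exact H3 | lia].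
Qed.

(* b m is matched at an index >= m of a full evolution of X passing through
   A at index m. *)
Lemma universal_ancestor_at_height A a m X b n :
  full_evolution E a m A -> ancestor E A X ->
  universal_evolution E b n X -> m <= n -> ancestor E A (b m).
Proof.
  intros Ha (d & j & Hd & Hd0 & <-) [_ Hu] Hmn.
  pose proof (full_evolution_cat Ha Hd Hd0) as Hg.
  destruct (embeds_index (Hu _ _ Hg)) as (r & _ & Hbound & Hiso).
  pose proof (Hbound m Hmn) as [Hrm HrmN].
  apply ancestor_trans with (cat a m d (r m)); [| apply Hiso; lia].
  destruct (Nat.eq_dec (r m) m) as [-> | Hne].
  - rewrite cat_l, (proj2 (proj2 Ha)) by lia; apply ancestor_refl.
  - rewrite cat_r, <- Hd0 by lia; apply ancestor_evolution with j; auto; lia.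
Qed.

Section Graft.
Variables (A X : V) (b : nat -> V) (m n : nat).
Hypotheses (HM : monotonous E) (Hb : universal_evolution E b n X)
  (Hm : height E A m) (Hmn : m <= n) (Hbm : ~ isotypic E (b m) A).

(* Concatenating a shortest full evolution of e 0 with e gives a full
   evolution of X into which b embeds; b m must land past the junction. *)
Lemma graft_embeds e k :
  evolution E e k -> e k = X -> isotypic E A (e 0) ->
  embeds E (graft A b m) (n - m + 1) e k.
Proof.
  intros He Hek HAe.
  destruct (monotonous_ancestor_height HM (proj2 HAe) Hm)
    as (q & [[f Hf] _] & Hqm).
  pose proof (full_evolution_cat Hf He eq_refl) as Hg; rewrite Hek in Hg.
  destruct (embeds_index (proj2 Hb _ _ Hg)) as (r & Hgap & Hbound & Hiso).
  pose proof (Hbound m Hmn) as [Hrm0 HrmN].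
  pose proof (Hbound n (le_n n)) as [_ HrnN]; rewrite Nat.sub_diag in HrnN.
  assert (Hrm : q < r m).
  { destruct (Nat.lt_ge_cases q (r m)) as [Hlt | Hge]; [exact Hlt | exfalso].
    apply Hbm; apply isotypic_trans with (f q); [| apply isotypic_sym].
    - replace (f q) with (f (r m)) by (f_equal; lia).
      rewrite <- (@cat_l _ f e q (r m)) by lia; apply Hiso; lia.
    - rewrite (proj2 (proj2 Hf)); exact HAe. }
  split; [lia |].
  exists (fun i => match i with 0 => 0 | S i => r (m + i) - q end); split; [| split].
  - intros [|i] Hi; cbn.
    + rewrite Nat.add_0_r; lia.
    + pose proof (Hgap (m + i) 1 ltac:(lia)); pose proof (proj1 (Hbound (m + i) ltac:(lia))).
      replace (m + (i + 1)) with (m + i + 1) by lia; lia.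
  - replace (n - m + 1) with (S (n - m)) by lia; cbn.
    replace (m + (n - m)) with n by lia; lia.
  - intros [|i] Hi; cbn [graft]; [exact HAe |].
    pose proof (Hgap m i ltac:(lia)).
    rewrite <- (@cat_r _ f e q (r (m + i))) by lia; apply Hiso; lia.
Qed.

End Graft.

End Quiver.

Section Clade.
Variables (V : Type) (E : V -> V -> Prop) (A : V).

Notation cvertex := (clade_vertex E A).
Notation cedge := (clade_edge E A).

Lemma clade_vertex_eq (x y : cvertex) : proj1_sig x = proj1_sig y -> x = y.
Proof. destruct x, y; cbn; intros ->; f_equal; apply proof_irrelevance. Qed.

Lemma clade_lift a p :
  ancestor E A (a 0) -> evolution E a p ->
  exists c : nat -> cvertex, evolution cedge c p /\
    forall i, i <= p -> proj1_sig (c i) = a i.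
Proof.
  intros H0 Ha.
  assert (HA : forall i, i <= p -> ancestor E A (a i)).
  { intros i Hi; apply ancestor_trans with (a 0); [exact H0 |].
    apply ancestor_evolution with p; auto; lia. }
  exists (fun i => match le_dec i p with
                   | left h => exist _ (a i) (HA i h)
                   | right _ => exist _ (a 0) H0 end); split.
  - intros k Hk; unfold clade_edge.
    destruct (le_dec k p), (le_dec (k - 1) p); try lia; apply Ha; auto.
  - intros i Hi; destruct (le_dec i p); [reflexivity | lia].
Qed.

Lemma clade_ancestorE (x y : cvertex) :
  ancestor cedge x y <-> ancestor E (proj1_sig x) (proj1_sig y).
Proof.
  split.
  - intros (c & p & Hc & <- & <-).
    exists (fun i => proj1_sig (c i)), p; repeat split; intros k Hk; apply Hc; auto.
  - intros (a & p & Ha & H0 & Hp).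
    destruct (@clade_lift a p) as (c & Hc & Hca); [rewrite H0; exact (proj2_sig x) | exact Ha |].
    exists c, p; repeat split; auto; apply clade_vertex_eq; rewrite Hca; auto; lia.
Qed.

Lemma clade_isotypicE (x y : cvertex) :
  isotypic cedge x y <-> isotypic E (proj1_sig x) (proj1_sig y).
Proof. unfold isotypic; rewrite !clade_ancestorE; reflexivity. Qed.

Lemma clade_primitive_root (x : cvertex) : proj1_sig x = A -> primitive cedge x.
Proof.
  intros Hx y Hy; split; [exact Hy |].
  apply clade_ancestorE; rewrite Hx; exact (proj2_sig y).
Qed.

Lemma clade_primitive_isotypic (x : cvertex) :
  primitive cedge x -> isotypic E A (proj1_sig x).
Proof.
  intros Hx.
  apply (clade_isotypicE (exist _ A (ancestor_refl E A)) x), Hx, clade_ancestorE.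
  exact (proj2_sig x).
Qed.

Lemma clade_universal_from_root u p (X : cvertex) :
  u 0 = A -> evolution E u p -> u p = proj1_sig X ->
  (forall e k, evolution E e k -> e k = proj1_sig X -> isotypic E A (e 0) ->
     embeds E u p e k) ->
  exists U, universal_evolution cedge U p X.
Proof.
  intros Hu0 Hu Hup Hemb.
  destruct (@clade_lift u p) as (U & HU & HUu); [rewrite Hu0; apply ancestor_refl | exact Hu |].
  exists U; split; [split; [| split] |].
  - exact HU.
  - apply clade_primitive_root; rewrite HUu by lia; exact Hu0.
  - apply clade_vertex_eq; rewrite HUu by lia; exact Hup.
  - intros d k (Hd & Hd0 & Hdk).
    destruct (Hemb (fun i => proj1_sig (d i)) k) as [Hpk (r & Hr & Hrk & Hiso)].
    + intros i Hi; apply Hd; exact Hi.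
    + rewrite Hdk; reflexivity.
    + apply clade_primitive_isotypic; exact Hd0.
    + split; [exact Hpk |]; exists r; split; [exact Hr | split; [exact Hrk |]].
      intros i Hi; apply clade_isotypicE; rewrite HUu by exact Hi; apply Hiso; exact Hi.
Qed.

End Clade.

Theorem lemma9p6 (V : Type) (E : V -> V -> Prop) (A B : V) (m n : nat)
  (hQ : phylogenetic_quiver E)
  (hA : regular E A)
  (hB : ancestor E A B)
  (hm : height E A m)
  (hn : height E B n)
  (hp : ~ parent_iter E (n - m) B A) :
  phylogenetic_vertex (clade_edge E A) (exist _ B hB) /\
  height (clade_edge E A) (exist _ B hB) (n - m + 1).
Proof.
  destruct hQ as [HM HP].
  destruct (HP B) as (b & l & Hb).
  rewrite (height_unique (universal_height Hb) hn) in Hb.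
  assert (Hmn : m <= n).
  { destruct (monotonous_ancestor_height HM hB hn) as (q & Hq & Hqn).
    rewrite (height_unique hm Hq); exact Hqn. }
  assert (HAbm : ancestor E A (b m)).
  { destruct hm as [[a Ha] _]; exact (universal_ancestor_at_height Ha hB Hb Hmn). }
  assert (Hedge : E (b m) A).
  { apply hA with m; auto; exact (universal_height (universal_prefix Hb Hmn)). }
  assert (Hbm : ~ isotypic E (b m) A).
  { intros Hiso; apply hp, parent_iter_isotypic with (b m); [| exact Hiso].
    replace m with (n - (n - m)) at 2 by lia; apply (parent_iter_universal Hb); lia. }
  destruct (clade_universal_from_root (u := graft A b m) (p := n - m + 1) (exist _ B hB))
    as (U & HU).
  - reflexivity.
  - apply evolution_graft; auto; apply (proj1 Hb).
  - rewrite graft_end by exact Hmn; apply (proj1 Hb).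
  - exact (graft_embeds HM Hb hm Hmn Hbm).
  - split; [exists U, (n - m + 1); exact HU | exact (universal_height HU)].
Qed.
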